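(* For every round $r$, there is at least one block $b$ of round $r$ such that every valid block of round $r+2$ has a path to $b$.
   Context: There are $n=3f+1$ validators, at most $f$ Byzantine; every honest validator creates exactly one block in every round. Every valid block of round $r$ has as parents (hash references) at least $2f+1$ blocks of round $r-1$ from distinct validators. There is a path from $b$ to $b'$ if $b'$ is reached from $b$ by repeatedly following parent references. *)

From mathcomp Require Import all_boot.
From Stdlib Require Import Relations.

Set Implicit Arguments.
Unset Strict Implicit.
Unset Printing Implicit Defensive.

(* A DAG of blocks: each block has an author (validator), a round, and
   parent (hash) references.  [parent b p] means b references p. *)

Definition valid_block (V : finType) (Block : Type) (f : nat)
    (author : Block -> V) (round : Block -> nat)
    (parent : Block -> Block -> Prop) (b : Block) : Prop :=
  round b = 0 \/
  exists S : {set V}, 2 * f + 1 <= #|S| /\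
    forall v, v \in S ->
      exists p, parent b p /\ author p = v /\ round p = (round b).-1.

Definition has_path (Block : Type) (parent : Block -> Block -> Prop)
    (b b' : Block) : Prop :=
  clos_refl_trans Block parent b b'.

(* For a fixed round r, let v -> u mean that the round r+1 block of the
   honest validator v references the round r block of the honest validator u.
   Every honest v has at least 2f+1 - |byz| >= f+1 honest successors, so by
   double counting some honest u has at least f+1 honest predecessors.  A
   valid round r+2 block references round r+1 blocks of 2f+1 validators, and
   among 3f+1 validators such a set must meet the f+1 predecessors of u; the
   block therefore reaches the round r block of u in two steps. *)

From mathcomp Require Import all_boot boolp zify.
From Stdlib Require Import Relations.

Set Implicit Arguments.
Unset Strict Implicit.
Unset Printing Implicit Defensive.

Lemma sum_card_out_in (T : finType) (A : {set T}) (R : rel T) :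
  \sum_(x in A) #|[set y in A | R x y]| = \sum_(y in A) #|[set x in A | R x y]|.
Proof.
have card_cond P (B : {set T}) : #|[set z in B | P z]| = \sum_(z in B) P z.
  by rewrite -sum1_card big_mkcond [RHS]big_mkcond; apply: eq_bigr => z _;
    rewrite inE; case: (z \in B); case: (P z).
under eq_bigr do rewrite card_cond.
by rewrite exchange_big; under [RHS]eq_bigr do rewrite card_cond.
Qed.

Lemma exists_large_indegree (T : finType) (A : {set T}) (R : rel T) k :
    A != set0 -> (forall x, x \in A -> k <= #|[set y in A | R x y]|) ->
  exists2 y, y \in A & k <= #|[set x in A | R x y]|.
Proof.
move=> A_neq0 out_ge.
case: (boolP [exists y in A, k <= #|[set x in A | R x y]|]) => [/exists_inP //|].
move=> /exists_inPn in_lt; exfalso.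
have out_sum : #|A| * k <= \sum_(x in A) #|[set y in A | R x y]|.
  by rewrite -sum_nat_const; apply: leq_sum.
have in_sum : \sum_(y in A) #|[set x in A | R x y]|.+1 <= #|A| * k.
  by rewrite -sum_nat_const; apply: leq_sum => y /in_lt; rewrite -ltnNge.
move: in_sum; under eq_bigr do rewrite -addn1.
rewrite big_split /= sum1_card -sum_card_out_in.
have := card_gt0 A; rewrite A_neq0; lia.
Qed.

Lemma setI_neq0_card (T : finType) (A B : {set T}) :
  #|T| < #|A| + #|B| -> A :&: B != set0.
Proof.
rewrite -cards_eq0 -cardsUI => T_lt; have := max_card (A :|: B); lia.
Qed.

Section RoundStructure.

Variables (f : nat) (V : finType) (Block : Type).
Variables (author : Block -> V) (round : Block -> nat).
Variable parent : Block -> Block -> Prop.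
Variable byz : {set V}.

Hypothesis card_V : #|V| = 3 * f + 1.
Hypothesis byz_le : #|byz| <= f.
Hypothesis honest_block : forall v, v \notin byz -> forall r, exists b,
  [/\ author b = v, round b = r, valid_block f author round parent b &
      forall b', author b' = v -> round b' = r -> b' = b].

Let honest := ~: byz.

Lemma honest_block_unique v r b1 b2 : v \notin byz ->
  author b1 = v -> round b1 = r -> author b2 = v -> round b2 = r -> b1 = b2.
Proof.
move=> /honest_block/(_ r) [b [_ _ _ b_uniq]] a1 r1 a2 r2.
by rewrite (b_uniq b1) // (b_uniq b2).
Qed.

Definition refers r (v u : V) : bool :=
  `[< exists bv bu, [/\ author bv = v, round bv = r.+1,
                       author bu = u, round bu = r & parent bv bu] >].

Lemma honest_refers_many r v : v \in honest ->
  2 * f + 1 - #|byz| <= #|[set u in honest | refers r v u]|.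
Proof.
rewrite inE => v_honest.
have [bv [bv_auth bv_round bv_valid _]] := honest_block v_honest r.+1.
case: bv_valid => [|[S [S_ge S_par]]]; first by rewrite bv_round.
have S_honest : #|S| - #|byz| <= #|S :\: byz|.
  by rewrite cardsD leq_sub2l // subset_leq_card // subsetIr.
apply: leq_trans (leq_sub2r _ S_ge) (leq_trans S_honest _).
apply/subset_leq_card/subsetP => u; rewrite !inE => /andP [u_honest uS].
rewrite u_honest; apply/asboolP.
have [p [bv_p [p_auth p_round]]] := S_par u uS.
by exists bv, p; rewrite bv_round in p_round.
Qed.

Lemma exists_honest_referred r : exists2 u, u \in honest &
  f.+1 <= #|[set v in honest | refers r v u]|.
Proof.
have honest_neq0 : honest != set0.
  by rewrite -card_gt0 /honest cardsCs setCK; lia.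
have [u u_honest u_in] := exists_large_indegree honest_neq0 (honest_refers_many r).
by exists u => //; apply: leq_trans u_in; lia.
Qed.

Lemma valid_block_reaches_referred r u bu b :
    u \in honest -> f.+1 <= #|[set v in honest | refers r v u]| ->
    author bu = u -> round bu = r ->
    round b = r.+2 -> valid_block f author round parent b ->
  has_path parent b bu.
Proof.
move=> u_honest u_in bu_auth bu_round b_round [|[S [S_ge S_par]]].
  by rewrite b_round.
have /set0Pn [v] : S :&: [set v in honest | refers r v u] != set0.
  by apply: setI_neq0_card; lia.
rewrite !inE => /and3P [vS v_honest /asboolP [bv [bu' refs]]].
case: refs => bv_auth bv_round bu'_auth bu'_round bv_bu'.
have [p [b_p [p_auth]]] := S_par v vS; rewrite b_round /= => p_round.
have p_bv : p = bv by apply: (honest_block_unique v_honest p_auth p_round).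
have bu_bu' : bu = bu'.
  move: u_honest; rewrite inE => u_honest.
  exact: honest_block_unique u_honest bu_auth bu_round bu'_auth bu'_round.
rewrite bu_bu'; apply: rt_trans (rt_step _ _ _ _ b_p) _.
by rewrite p_bv; apply: rt_step.
Qed.

End RoundStructure.

Theorem lemma10 (f : nat) (V : finType) (Block : Type)
    (author : Block -> V) (round : Block -> nat)
    (parent : Block -> Block -> Prop) (byz : {set V}) :
  #|V| = 3 * f + 1 ->
  #|byz| <= f ->
  (* every honest validator creates exactly one block in every round,
     and that block is valid *)
  (forall v, v \notin byz -> forall r, exists b,
      [/\ author b = v, round b = r,
          valid_block f author round parent b &
          forall b', author b' = v -> round b' = r -> b' = b]) ->
  forall r, exists b, round b = r /\
    forall b', round b' = r.+2 -> valid_block f author round parent b' ->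
      has_path parent b' b.
Proof.
move=> card_V byz_le honest_block r.
have [u u_honest u_referred] := exists_honest_referred card_V byz_le honest_block r.
have := u_honest; rewrite inE => /honest_block/(_ r) [bu [bu_auth bu_round _ _]].
exists bu; split=> // b'.
exact: valid_block_reaches_referred u_honest u_referred bu_auth bu_round.
Qed.
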